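(* Let $m$ be a positive integer, $I=\{m\}$, and $\rho_m=\frac{m}{e}\,(me)^{1/m}$. Then every complex root of $d(I;z)$ lies in the union of the discs $\mathcal D_k=\{z\in\mathbb C\mid |z-k|\le\rho_m\}$ for $k=0,1,\dots,m-1$.
   Context: $d(I;z)$ is the descent polynomial: the unique polynomial whose value at each integer $n>\max(I\cup\{0\})$ is the number of permutations $\pi\in\mathfrak S_n$ with $\{j\mid\pi_j>\pi_{j+1}\}=I$, evaluated at complex $z$. For $I=\{m\}$, $d(I;z)=\binom{z}{m}-1$. *)

From Stdlib Require Import Reals Arith Factorial.
Open Scope R_scope.

Record Cplx : Type := mkC { Re : R ; Im : R }.

Definition Cadd (z w : Cplx) : Cplx := mkC (Re z + Re w) (Im z + Im w).
Definition Csub (z w : Cplx) : Cplx := mkC (Re z - Re w) (Im z - Im w).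
Definition Cmul (z w : Cplx) : Cplx :=
  mkC (Re z * Re w - Im z * Im w) (Re z * Im w + Im z * Re w).
Definition Cscale (r : R) (z : Cplx) : Cplx := mkC (r * Re z) (r * Im z).
Definition Cof_R (r : R) : Cplx := mkC r 0.
Definition C0 : Cplx := Cof_R 0.
Definition C1 : Cplx := Cof_R 1.
Definition Cmod (z : Cplx) : R := sqrt (Re z ^ 2 + Im z ^ 2).

Fixpoint Cfalling (z : Cplx) (m : nat) : Cplx :=
  match m with
  | O => C1
  | S k => Cmul (Cfalling z k) (Csub z (Cof_R (INR k)))
  end.

Definition Cbinom (z : Cplx) (m : nat) : Cplx :=
  Cscale (/ INR (fact m)) (Cfalling z m).

(* descent polynomial for I = {m}:  d({m}; z) = binom(z, m) - 1 *)
Definition desc_poly_single (m : nat) (z : Cplx) : Cplx :=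
  Csub (Cbinom z m) C1.

Definition rho (m : nat) : R :=
  (INR m / exp 1) * Rpower (INR m * exp 1) (/ INR m).

(* If every factor [z - k] of [z (z-1) ... (z-m+1)] had modulus larger than
   [rho_m], the product would exceed [rho_m ^ m = m^(m+1) e^(1-m)]. At a root
   of [binom(z, m) - 1] the product equals [m!], and [m! <= m^(m+1) e^(1-m)]
   follows by induction from [e <= (1 + 1/n)^(n+1)]. *)
From Stdlib Require Import Reals Factorial Lra Lia Classical.
Open Scope R_scope.

Lemma Cmod_mul (z w : Cplx) : Cmod (Cmul z w) = Cmod z * Cmod w.
Proof.
  unfold Cmod, Cmul; simpl.
  rewrite <- sqrt_mult by nra.
  f_equal; ring.
Qed.

Lemma Cmod_Cof_R (x : R) : 0 <= x -> Cmod (Cof_R x) = x.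
Proof.
  intros Hx; unfold Cmod, Cof_R; simpl.
  replace (x * (x * 1) + 0 * (0 * 1)) with (x ^ 2) by ring.
  now apply sqrt_pow2.
Qed.

Lemma Cfalling_of_desc_poly_single_root (m : nat) (z : Cplx) :
  desc_poly_single m z = C0 -> Cfalling z m = Cof_R (INR (fact m)).
Proof.
  unfold desc_poly_single, Cbinom, Csub, Cscale, C0, C1, Cof_R.
  destruct (Cfalling z m) as [a b]; simpl; intros Hd.
  injection Hd as Ha Hb.
  assert (Hf : 0 < INR (fact m)) by apply (lt_0_INR _ (lt_O_fact m)).
  f_equal.
  - apply (Rmult_eq_reg_l (/ INR (fact m))); [|apply Rinv_neq_0_compat; lra].
    rewrite Rinv_l by lra; lra.
  - apply (Rmult_eq_reg_l (/ INR (fact m))); [|apply Rinv_neq_0_compat; lra].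
    lra.
Qed.

Section FallingFactorialBounds.

Variables (z : Cplx) (r : R).
Hypothesis r_pos : 0 < r.

Lemma pow_le_Cmod_Cfalling (n : nat) :
  (forall k, (k < n)%nat -> r < Cmod (Csub z (Cof_R (INR k)))) ->
  r ^ n <= Cmod (Cfalling z n).
Proof.
  induction n as [|n IH]; intros Hfar.
  - change (Cfalling z 0) with (Cof_R 1); rewrite Cmod_Cof_R; simpl; lra.
  - simpl; rewrite Cmod_mul, Rmult_comm.
    assert (Hn := IH (fun k Hk => Hfar k ltac:(lia))).
    assert (Hlast := Hfar n ltac:(lia)).
    assert (0 < r ^ n) by (apply pow_lt; lra).
    apply Rmult_le_compat; lra.
Qed.

Lemma pow_lt_Cmod_Cfalling (n : nat) : (0 < n)%nat ->
  (forall k, (k < n)%nat -> r < Cmod (Csub z (Cof_R (INR k)))) ->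
  r ^ n < Cmod (Cfalling z n).
Proof.
  destruct n as [|n]; [lia|]; intros _ Hfar.
  simpl; rewrite Cmod_mul, Rmult_comm.
  assert (Hn := pow_le_Cmod_Cfalling n (fun k Hk => Hfar k ltac:(lia))).
  assert (Hlast := Hfar n ltac:(lia)).
  assert (0 < r ^ n) by (apply pow_lt; lra).
  apply Rle_lt_trans with (Cmod (Cfalling z n) * r).
  - apply Rmult_le_compat_r; lra.
  - apply Rmult_lt_compat_l; lra.
Qed.

Lemma exists_near_of_Cmod_Cfalling_le (n : nat) : (0 < n)%nat ->
  Cmod (Cfalling z n) <= r ^ n ->
  exists k, (k < n)%nat /\ Cmod (Csub z (Cof_R (INR k))) <= r.
Proof.
  intros Hn Hsmall.
  apply NNPP; intros Hnone.
  assert (Hfar : forall k, (k < n)%nat -> r < Cmod (Csub z (Cof_R (INR k)))).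
  { intros k Hk; apply Rnot_le_lt; intros Hnear; apply Hnone; now exists k. }
  assert (Hbig := pow_lt_Cmod_Cfalling n Hn Hfar).
  lra.
Qed.

End FallingFactorialBounds.

Lemma exp_mul_INR (n : nat) (y : R) : exp (INR n * y) = exp y ^ n.
Proof.
  induction n as [|n IH].
  - simpl; now rewrite Rmult_0_l, exp_0.
  - rewrite S_INR, Rmult_plus_distr_r, exp_plus, IH, Rmult_1_l; simpl; ring.
Qed.

(* From [1 - y <= exp (- y)] at [y = 1/(n+1)]. *)
Lemma exp_inv_succ_mul_le (n : nat) :
  exp (/ (INR n + 1)) * INR n <= INR n + 1.
Proof.
  assert (Hn : 0 <= INR n) by apply pos_INR.
  set (y := / (INR n + 1)).
  assert (Hy : 0 < y) by (apply Rinv_0_lt_compat; lra).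
  assert (Hy1 : (INR n + 1) * y = 1) by (unfold y; field; lra).
  assert (Hexp : 1 - y <= / exp y).
  { rewrite <- exp_Ropp; generalize (exp_ineq1_le (- y)); lra. }
  assert (Hey : 0 < exp y) by apply exp_pos.
  apply (Rmult_le_reg_r (y * / exp y)).
  - apply Rmult_lt_0_compat; [lra | now apply Rinv_0_lt_compat].
  - replace (exp y * INR n * (y * / exp y)) with (INR n * y) by (field; lra).
    rewrite <- Rmult_assoc, Hy1, Rmult_1_l; lra.
Qed.

Lemma exp1_mul_pow_le (n : nat) :
  exp 1 * INR n ^ S n <= INR (S n) ^ S n.
Proof.
  assert (He : exp 1 = exp (/ (INR n + 1)) ^ S n).
  { rewrite <- exp_mul_INR, S_INR; f_equal; field; generalize (pos_INR n); lra. }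
  rewrite He, <- Rpow_mult_distr, S_INR.
  apply pow_incr; split.
  - apply Rmult_le_pos; [left; apply exp_pos | apply pos_INR].
  - apply exp_inv_succ_mul_le.
Qed.

Lemma fact_mul_exp_pow_le (n : nat) :
  INR (fact (S n)) * exp 1 ^ S n <= INR (S n) ^ S (S n) * exp 1.
Proof.
  assert (He : 0 < exp 1) by apply exp_pos.
  induction n as [|n IH].
  - simpl; lra.
  - set (N := INR (S (S n))).
    assert (HN : 0 < N) by (apply lt_0_INR; lia).
    replace (INR (fact (S (S n))) * exp 1 ^ S (S n))
      with (N * exp 1 * (INR (fact (S n)) * exp 1 ^ S n))
      by (unfold N; change (fact (S (S n))) with (S (S n) * fact (S n))%nat;
          rewrite mult_INR; simpl; ring).
    replace (N ^ S (S (S n)) * exp 1) with (N * exp 1 * N ^ S (S n))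
      by (simpl; ring).
    apply Rmult_le_compat_l; [nra|].
    apply Rle_trans with (INR (S n) ^ S (S n) * exp 1); [exact IH|].
    rewrite Rmult_comm; apply exp1_mul_pow_le.
Qed.

Lemma rho_mul_exp_pow (m : nat) : (0 < m)%nat ->
  (rho m * exp 1) ^ m = INR m ^ S m * exp 1.
Proof.
  intros Hm.
  assert (Hm1 : 0 < INR m) by now apply lt_0_INR.
  assert (He : 0 < exp 1) by apply exp_pos.
  assert (Hroot : Rpower (INR m * exp 1) (/ INR m) ^ m = INR m * exp 1).
  { rewrite <- Rpower_pow by (unfold Rpower; apply exp_pos).
    rewrite Rpower_mult, Rinv_l by lra.
    apply Rpower_1; nra. }
  unfold rho.
  replace (INR m / exp 1 * Rpower (INR m * exp 1) (/ INR m) * exp 1)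
    with (INR m * Rpower (INR m * exp 1) (/ INR m)) by (field; lra).
  rewrite Rpow_mult_distr, Hroot; simpl; ring.
Qed.

Lemma fact_le_rho_pow (m : nat) : (0 < m)%nat -> INR (fact m) <= rho m ^ m.
Proof.
  intros Hm.
  assert (Hem : 0 < exp 1 ^ m) by (apply pow_lt, exp_pos).
  apply (Rmult_le_reg_r (exp 1 ^ m)); [exact Hem|].
  rewrite <- Rpow_mult_distr, rho_mul_exp_pow by exact Hm.
  destruct m as [|m]; [lia|].
  apply fact_mul_exp_pow_le.
Qed.

Lemma rho_pos (m : nat) : (0 < m)%nat -> 0 < rho m.
Proof.
  intros Hm; unfold rho, Rdiv, Rpower.
  assert (0 < INR m) by now apply lt_0_INR.
  assert (0 < / exp 1) by (apply Rinv_0_lt_compat, exp_pos).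
  assert (0 < exp (/ INR m * ln (INR m * exp 1))) by apply exp_pos.
  apply Rmult_lt_0_compat; [apply Rmult_lt_0_compat|]; assumption.
Qed.

Theorem theorem4p8 (m : nat) (Hm : (0 < m)%nat) (z : Cplx) :
  desc_poly_single m z = C0 ->
  exists k : nat, (k < m)%nat /\ Cmod (Csub z (Cof_R (INR k))) <= rho m.
Proof.
  intros Hroot.
  apply (exists_near_of_Cmod_Cfalling_le z (rho m) (rho_pos m Hm) m Hm).
  rewrite (Cfalling_of_desc_poly_single_root m z Hroot), Cmod_Cof_R by apply pos_INR.
  now apply fact_le_rho_pow.
Qed.
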